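(* Let $x_1,x_2,y_1,y_2\in\mathbb{R}$, $d>0$, and $$f(x)=\big((x-x_1)^2+y_1^2+d^2\big)\big((x-x_2)^2+y_2^2+d^2\big),\quad x\in\mathbb{R}.$$ If $|y_1|\le|y_2|$, then the optimal (minimizing) antenna location $x^*$ of $f$ satisfies $|x^*-x_1|\le|x^*-x_2|$ (i.e., it is closer to user 1); otherwise ($|y_1|>|y_2|$), $|x^*-x_1|\ge|x^*-x_2|$. (Here $x^*$ is understood as a global minimizer of $f$ that can be chosen with the stated property.)
   Context: $f$ is the high-SNR approximation of the two-user TDMA sum-throughput maximization objective for a pinching antenna at $(x,0,d)$ serving users at $(x_1,y_1,0)$ and $(x_2,y_2,0)$: maximizing throughput is approximated by minimizing $f$. *)

From Stdlib Require Import Reals.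
Open Scope R_scope.

(* High-SNR TDMA objective for a pinching antenna at (x,0,d), users at
   (x1,y1,0) and (x2,y2,0). *)
Definition pinch_obj (x1 y1 x2 y2 d x : R) : R :=
  ((x - x1)^2 + y1^2 + d^2) * ((x - x2)^2 + y2^2 + d^2).

(* [pinch_obj] is continuous and grows at least like [d^2 (x - x1)^2], so it has a
   global minimizer [m].  The reflection [x |-> x1 + x2 - x] swaps the distances to
   [x1] and [x2] and changes the objective by
   [((x - x1)^2 - (x - x2)^2) (y2^2 - y1^2)]; hence whichever of [m] and its mirror
   image lies on the side of the user with the smaller [|y|] is a minimizer too. *)
From Stdlib Require Import Reals Lra Psatz.
Open Scope R_scope.

Lemma continuity_coercive_has_min (f : R -> R) (c K : R) :
  continuity f -> 0 <= K ->
  (forall x, K < Rabs (x - c) -> f c <= f x) ->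
  exists m, forall x, f m <= f x.
Proof.
  intros f_cont K_ge0 far.
  destruct (continuity_ab_min f (c - K) (c + K)) as [m [m_min m_in]];
    [lra | intros; apply f_cont |].
  exists m; intros x.
  destruct (Rle_lt_dec (Rabs (x - c)) K) as [near | far_x].
  - apply m_min; revert near; unfold Rabs; destruct (Rcase_abs (x - c)); lra.
  - apply Rle_trans with (f c); [apply m_min; lra | exact (far x far_x)].
Qed.

Lemma continuity_sqr_bounded_below_has_min (f : R -> R) (x0 c : R) :
  continuity f -> 0 < c -> (forall x, c * (x - x0)² <= f x) ->
  exists m, forall x, f m <= f x.
Proof.
  intros f_cont c_gt0 lower.
  assert (f0_ge0 : 0 <= f x0).
  { specialize (lower x0); replace (x0 - x0) with 0 in lower by ring.
    rewrite Rsqr_0, Rmult_0_r in lower; exact lower. }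
  set (K := f x0 / c + 1).
  assert (cK : c * K = f x0 + c) by (unfold K; field; lra).
  assert (K_ge1 : 1 <= K)
    by (unfold K; pose proof (Rle_mult_inv_pos _ _ f0_ge0 c_gt0); unfold Rdiv; lra).
  apply (continuity_coercive_has_min f x0 K f_cont); [lra |].
  intros x far; apply Rle_trans with (c * (x - x0)²); [| apply lower].
  assert (K < (x - x0)²)
    by (rewrite (Rsqr_abs (x - x0)); unfold Rsqr; nra).
  nra.
Qed.

Lemma continuity_pinch_obj (x1 y1 x2 y2 d : R) :
  continuity (pinch_obj x1 y1 x2 y2 d).
Proof. intros x; unfold pinch_obj; reg. Qed.

Lemma pinch_obj_ge_sqr_dist (x1 y1 x2 y2 d x : R) :
  d² * (x - x1)² <= pinch_obj x1 y1 x2 y2 d x.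
Proof.
  pose proof (pow2_ge_0 (x - x1)); pose proof (pow2_ge_0 (x - x2)).
  pose proof (pow2_ge_0 y1); pose proof (pow2_ge_0 y2); pose proof (pow2_ge_0 d).
  unfold pinch_obj; rewrite !Rsqr_pow2, Rmult_comm.
  apply Rmult_le_compat; lra.
Qed.

Lemma pinch_obj_has_min (x1 y1 x2 y2 d : R) : 0 < d ->
  exists m, forall x, pinch_obj x1 y1 x2 y2 d m <= pinch_obj x1 y1 x2 y2 d x.
Proof.
  intros d_gt0; apply (continuity_sqr_bounded_below_has_min _ x1 d²).
  - apply continuity_pinch_obj.
  - apply Rlt_0_sqr; lra.
  - apply pinch_obj_ge_sqr_dist.
Qed.

Lemma pinch_obj_sub_reflect (x1 y1 x2 y2 d x : R) :
  pinch_obj x1 y1 x2 y2 d x - pinch_obj x1 y1 x2 y2 d (x1 + x2 - x)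
  = ((x - x1)² - (x - x2)²) * (y2² - y1²).
Proof. unfold pinch_obj, Rsqr; ring. Qed.

Lemma pinch_obj_comm (x1 y1 x2 y2 d x : R) :
  pinch_obj x1 y1 x2 y2 d x = pinch_obj x2 y2 x1 y1 d x.
Proof. unfold pinch_obj; ring. Qed.

Lemma pinch_obj_min_closer_to_smaller (x1 x2 y1 y2 d : R) : 0 < d ->
  Rabs y1 <= Rabs y2 ->
  exists xs,
    (forall x, pinch_obj x1 y1 x2 y2 d xs <= pinch_obj x1 y1 x2 y2 d x) /\
    Rabs (xs - x1) <= Rabs (xs - x2).
Proof.
  intros d_gt0 y_le.
  destruct (pinch_obj_has_min x1 y1 x2 y2 d d_gt0) as [m m_min].
  destruct (Rle_lt_dec (Rabs (m - x1)) (Rabs (m - x2))) as [closer | farther].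
  - exists m; split; assumption.
  - exists (x1 + x2 - m); split.
    + assert (gain : 0 <= ((m - x1)² - (m - x2)²) * (y2² - y1²)).
      { apply Rmult_le_pos.
        - apply Rsqr_lt_abs_1 in farther; lra.
        - apply Rsqr_le_abs_1 in y_le; lra. }
      intros x; pose proof (pinch_obj_sub_reflect x1 y1 x2 y2 d m).
      pose proof (m_min x); lra.
    + replace (x1 + x2 - m - x1) with (- (m - x2)) by ring.
      replace (x1 + x2 - m - x2) with (- (m - x1)) by ring.
      rewrite !Rabs_Ropp; lra.
Qed.

Theorem lemma4 (x1 x2 y1 y2 d : R) (hd : 0 < d) :
  exists xs : R,
    (forall x : R, pinch_obj x1 y1 x2 y2 d xs <= pinch_obj x1 y1 x2 y2 d x) /\
    (Rabs y1 <= Rabs y2 -> Rabs (xs - x1) <= Rabs (xs - x2)) /\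
    (Rabs y1 > Rabs y2 -> Rabs (xs - x1) >= Rabs (xs - x2)).
Proof.
  destruct (Rle_lt_dec (Rabs y1) (Rabs y2)) as [y_le | y_gt].
  - destruct (pinch_obj_min_closer_to_smaller x1 x2 y1 y2 d hd y_le)
      as [xs [xs_min closer]].
    exists xs; repeat split; [exact xs_min | intros; exact closer | intros; lra].
  - destruct (pinch_obj_min_closer_to_smaller x2 x1 y2 y1 d hd (Rlt_le _ _ y_gt))
      as [xs [xs_min closer]].
    exists xs; repeat split; [| intros; lra | intros; lra].
    intros x; rewrite !(pinch_obj_comm x1 y1 x2 y2); apply xs_min.
Qed.
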